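(* Let $G$ be a Hausdorff étale groupoid, let $R$ be a commutative unital ring with the discrete topology, let $T \le R^\times$, and let $(\Sigma, i, q)$ be a discrete twist by $T$ over $G$. Then: (a) $\Sigma$ is étale; (b) $i$ is a homeomorphism onto an open subset of $\Sigma$; (c) for each $\alpha \in G$ there exist an open bisection $B_\alpha$ of $G$ containing $\alpha$ and a continuous map $P_\alpha\colon B_\alpha \to \Sigma$ satisfying $q \circ P_\alpha = \mathrm{id}_{B_\alpha}$, such that $(\beta,z) \mapsto i(r(\beta),z)P_\alpha(\beta)$ is a homeomorphism $B_\alpha \times T \to q^{-1}(B_\alpha)$, and additionally $P_\alpha(G^{(0)} \cap B_\alpha) \subseteq \Sigma^{(0)}$; (d) if $G$ is ample, then for each $\alpha \in G$ the open bisection $B_\alpha$ and the map $P_\alpha$ satisfying the first two properties in (c) can be chosen with $B_\alpha$ compact.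
   Context: Groupoids are locally compact Hausdorff topological groupoids; $G$ is étale if $r$ is a local homeomorphism, ample if it has a basis of compact open bisections. A discrete twist by $T$ over $G$ is a sequence $G^{(0)} \times T \xrightarrow{i} \Sigma \xrightarrow{q} G$, where $T$ carries the discrete topology, $G^{(0)} \times T$ is the trivial group bundle with fibres $T$, $\Sigma$ is a Hausdorff groupoid with $\Sigma^{(0)} = i(G^{(0)} \times \{1\})$, and $i, q$ are continuous groupoid homomorphisms restricting to homeomorphisms of unit spaces, such that: (1) $i(\{x\} \times T) = q^{-1}(x)$ for all $x \in G^{(0)}$, $i$ is injective, and $q$ is a quotient map; (2) for each $\alpha \in G$ there are an open bisection $B_\alpha \ni \alpha$ of $G$ and a continuous $P_\alpha\colon B_\alpha \to \Sigma$ with $q \circ P_\alpha = \mathrm{id}_{B_\alpha}$ such that $(\beta,z) \mapsto i(r(\beta),z)P_\alpha(\beta)$ is a homeomorphism $B_\alpha \times T \to q^{-1}(B_\alpha)$; (3) $i(r(\varepsilon),z)\varepsilon = \varepsilon\, i(s(\varepsilon),z)$ for all $\varepsilon \in \Sigma$, $z \in T$. $\Sigma^{(0)}$ is identified with $G^{(0)}$ via $q$. *)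

From HB Require Import structures.
From mathcomp Require Import all_boot all_order all_algebra.
From mathcomp Require Import all_classical all_reals.
From mathcomp Require Import topology.
Set Implicit Arguments.
Unset Strict Implicit.
Unset Printing Implicit Defensive.
Import Order.TTheory GRing.Theory Num.Theory.
Local Open Scope classical_set_scope.
Local Open Scope ring_scope.

(** Groupoid operations on a carrier X, encoded by total functions:
    range, source, multiplication (meaningful on composable pairs
    a, b with [gs a = gr b], i.e. the product [ab]) and inverse. *)
Record gops (X : Type) := GOps {
  gr : X -> X ;
  gs : X -> X ;
  gmul : X -> X -> X ;
  ginv : X -> X }.

Definition units_of {X : Type} (o : gops X) : set X := [set x | gr o x = x].

Definition composable {X : Type} (o : gops X) : set (X * X) :=
  [set p | gs o p.1 = gr o p.2].

Definition is_groupoid {X : Type} (o : gops X) : Prop :=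
  [/\ (forall a, gs o (gr o a) = gr o a /\ gr o (gr o a) = gr o a) /\
      (forall a, gr o (gs o a) = gs o a /\ gs o (gs o a) = gs o a),
      (forall a b, gs o a = gr o b ->
         gr o (gmul o a b) = gr o a /\ gs o (gmul o a b) = gs o b),
      (forall a b c, gs o a = gr o b -> gs o b = gr o c ->
         gmul o (gmul o a b) c = gmul o a (gmul o b c)),
      (forall a, gmul o (gr o a) a = a /\ gmul o a (gs o a) = a) &
      (forall a, [/\ gr o (ginv o a) = gs o a, gs o (ginv o a) = gr o a,
                     gmul o a (ginv o a) = gr o a &
                     gmul o (ginv o a) a = gs o a])].

Definition topological_groupoid {X : topologicalType} (o : gops X) : Prop :=
  [/\ is_groupoid o, continuous (gr o), continuous (gs o),
      continuous (ginv o) &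
      {within composable o, continuous (fun p : X * X => gmul o p.1 p.2)}].

Definition homeo {X Y : topologicalType} (A : set X) (B : set Y)
  (f : X -> Y) : Prop :=
  exists g : Y -> X,
    [/\ (forall a, A a -> B (f a)), (forall b, B b -> A (g b)),
        (forall a, A a -> g (f a) = a) /\ (forall b, B b -> f (g b) = b),
        {within A, continuous f} & {within B, continuous g}].

Definition open_in {X : topologicalType} (E U : set X) : Prop :=
  exists O, open O /\ U = E `&` O.

Definition local_homeo_onto {X : topologicalType} (E : set X) (f : X -> X) :=
  (forall x, E (f x)) /\
  forall x, exists U, [/\ open U, U x, open_in E (f @` U) &
                          homeo U (f @` U) f].

Definition etale {X : topologicalType} (o : gops X) : Prop :=
  local_homeo_onto (units_of o) (gr o).

Definition bisection {X : Type} (o : gops X) (B : set X) : Prop :=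
  (forall a b, B a -> B b -> gr o a = gr o b -> a = b) /\
  (forall a b, B a -> B b -> gs o a = gs o b -> a = b).

Definition open_bisection {X : topologicalType} (o : gops X) (B : set X) :=
  open B /\ bisection o B.

Definition ample {X : topologicalType} (o : gops X) : Prop :=
  forall U x, open U -> U x ->
    exists B, [/\ open_bisection o B, compact B, B x & B `<=` U].

Definition groupoid_hom {X Y : Type} (D : set X) (o1 : gops X) (o2 : gops Y)
  (f : X -> Y) : Prop :=
  (forall a, D a -> f (gr o1 a) = gr o2 (f a) /\ f (gs o1 a) = gs o2 (f a)) /\
  (forall a b, D a -> D b -> gs o1 a = gr o1 b ->
     f (gmul o1 a b) = gmul o2 (f a) (f b)).

Definition quotient_map {X Y : topologicalType} (f : X -> Y) : Prop :=
  [/\ continuous f, (forall y, exists x, f x = y) &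
      (forall U : set Y, open (f @^-1` U) -> open U)].

Definition unit_subgroup {R : comUnitRingType} (T : set R) : Prop :=
  [/\ (forall z, T z -> z \is a GRing.unit), T 1,
      (forall z w, T z -> T w -> T (z * w)) &
      (forall z, T z -> T z^-1)].

(** The trivial group bundle G^(0) x T, as a subset of
    G x R (R with the discrete topology), with its groupoid operations. *)
Definition bundle_dom {X : Type} {R : comUnitRingType} (o : gops X)
  (T : set R) : set (X * discrete_topology R) :=
  [set p | units_of o p.1 /\ T p.2].

Definition bundle_ops (X : Type) (R : comUnitRingType) :
  gops (X * discrete_topology R) :=
  @GOps (X * discrete_topology R)
    (fun p => (p.1, (1 : R))) (fun p => (p.1, (1 : R)))
    (fun p q => (p.1, (p.2 : R) * q.2)) (fun p => (p.1, (p.2 : R)^-1)).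

Definition bundle_units {X : Type} (o : gops X) (R : comUnitRingType) :
  set (X * discrete_topology R) := [set p | units_of o p.1 /\ p.2 = (1 : R)].

Arguments bundle_units {X} o R.

Definition prod_T {X : Type} {R : comUnitRingType} (B : set X) (T : set R) :
  set (X * discrete_topology R) := [set p | B p.1 /\ T p.2].

Definition triv_map {G S : Type} {R : comUnitRingType} (oG : gops G)
  (oS : gops S) (i : G * discrete_topology R -> S) (P : G -> S) :
  G * discrete_topology R -> S :=
  fun p => gmul oS (i (gr oG p.1, p.2)) (P p.1).

Definition discrete_twist {G S : topologicalType} {R : comUnitRingType}
  (oG : gops G) (T : set R) (oS : gops S)
  (i : G * discrete_topology R -> S) (q : S -> G) : Prop :=
  [/\ topological_groupoid oS /\ hausdorff_space S /\
      units_of oS = i @` bundle_units oG R,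
      [/\ {within bundle_dom oG T, continuous i},
          groupoid_hom (bundle_dom oG T) (bundle_ops G R) oS i,
          continuous q & groupoid_hom setT oS oG q],
      (homeo (bundle_units oG R) (units_of oS) i /\
      homeo (units_of oS) (units_of oG) q) /\
      [/\ (forall x, units_of oG x ->
             i @` prod_T [set x] T = q @^-1` [set x]),
          (forall p p', bundle_dom oG T p -> bundle_dom oG T p' ->
             i p = i p' -> p = p') &
          quotient_map q],
      (forall alpha, exists B, exists P : G -> S,
         [/\ open_bisection oG B, B alpha, {within B, continuous P},
             (forall beta, B beta -> q (P beta) = beta) &
             homeo (prod_T B T) (q @^-1` B) (triv_map oG oS i P)]) &
      (forall e z, T z ->
         gmul oS (i (q (gr oS e), z)) e =
         gmul oS e (i (q (gs oS e), z)))].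

From HB Require Import structures.
From mathcomp Require Import all_boot all_order all_algebra.
From mathcomp Require Import all_classical all_reals.
From mathcomp Require Import topology.
Local Open Scope classical_set_scope.
Local Open Scope ring_scope.
Set Implicit Arguments.
Unset Strict Implicit.
Unset Printing Implicit Defensive.
Import GRing.Theory.

(* Everything is read off the local trivialisations (B, P) of axiom (2).
   For fixed z in T, the sheet {i(r b, z) P(b) | b in B'} is mapped
   homeomorphically onto B' by q, and r_Sigma = (x |-> i(x, 1)) o r_G o q;
   so r_Sigma is a local homeomorphism because r_G is, which gives (a).
   For (b), i(G^(0) x T) = q^-1(G^(0)) is open, and the T-coordinate of its
   points is locally constant: e |-> i(q e, z0^-1) e is continuous and lands
   in the open unit space of Sigma exactly where the coordinate is z0.
   For (c) take B = G^(0) and P(x) = i(x, 1) when alpha is a unit, and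
   otherwise shrink a trivialisation away from the closed set G^(0); for (d)
   shrink it to a compact open bisection. *)

Lemma within_continuousP {X Y : topologicalType} (A : set X) (f : X -> Y) :
  {within A, continuous f} <-> forall x, A x -> forall V, open V -> V (f x) ->
    exists W, [/\ open W, W x & forall y, A y -> W y -> V (f y)].
Proof.
rewrite subspace_continuousP; split => [cf x Ax V oV Vfx|cf x Ax V].
  have := cf x Ax V (open_nbhs_nbhs (conj oV Vfx)).
  rewrite /= nbhs_simpl /within /prop_near1 nbhsE => -[W [oW Wx] WV].
  by exists W; split => // y Ay Wy; exact: WV.
rewrite /= nbhs_simpl nbhsE => -[V' [oV' V'fx] V'V].
have [W [oW Wx WV]] := cf x Ax V' oV' V'fx.
by rewrite /within /prop_near1 /= nbhsE; exists W => // y Wy Ay; exact/V'V/WV.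
Qed.

Lemma within_continuous_pair {X Y Z : topologicalType}
    (A : set X) (f : X -> Y) (g : X -> Z) :
  {within A, continuous f} -> {within A, continuous g} ->
  {within A, continuous (fun x => (f x, g x))}.
Proof. move=> cf cg x; exact: (cvg_pair (cf x) (cg x)). Qed.

Lemma within_continuous_comp_within {X Y Z : topologicalType}
    (A : set X) (B : set Y) (f : X -> Y) (g : Y -> Z) :
  {within A, continuous f} -> (forall x, A x -> B (f x)) ->
  {within B, continuous g} -> {within A, continuous (g \o f)}.
Proof.
move=> /within_continuousP cf fAB /within_continuousP cg.
apply/within_continuousP => x Ax V oV Vgfx.
have [W1 [oW1 W1fx W1V]] := cg (f x) (fAB x Ax) V oV Vgfx.
have [W2 [oW2 W2x W2W1]] := cf x Ax W1 oW1 W1fx.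
by exists W2; split => // y Ay W2y; apply: W1V; [exact: fAB|exact: W2W1].
Qed.

Lemma within_continuous_locally_constant {X Y : topologicalType}
    (A : set X) (f : X -> Y) :
  (forall x, A x -> exists W,
     [/\ open W, W x & forall y, A y -> W y -> f y = f x]) ->
  {within A, continuous f}.
Proof.
move=> fcst; apply/within_continuousP => x Ax V _ Vfx.
have [W [oW Wx Wf]] := fcst x Ax.
by exists W; split => // y Ay Wy; rewrite Wf.
Qed.

Lemma open_setX {X Y : topologicalType} (P : set X) (Q : set Y) :
  open P -> open Q -> open (P `*` Q).
Proof.
move=> oP oQ; rewrite openE => -[x y] [Px Qy].
by exists (P, Q) => //; split; apply: open_nbhs_nbhs.
Qed.

Lemma open_in_preimage {X Y : topologicalType}
    (A : set X) (f : X -> Y) (V : set Y) :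
  {within A, continuous f} -> open V -> open_in A (A `&` f @^-1` V).
Proof.
move=> /continuousP cf /cf /open_subspaceP [W oW WA].
by exists W; split => //; rewrite setIC -WA setIC.
Qed.

Lemma open_in_open {X : topologicalType} (A D : set X) :
  open A -> open_in A D -> open D.
Proof. by move=> oA [O [oO ->]]; exact: openI. Qed.

Lemma open_in_trans {X : topologicalType} (E C D : set X) :
  open_in E C -> open_in C D -> open_in E D.
Proof.
case=> O1 [oO1 ->] [O2 [oO2 ->]].
by exists (O1 `&` O2); split; [exact: openI|rewrite setIA].
Qed.

Lemma homeo_image {X Y : topologicalType} (A : set X) (B : set Y)
    (f : X -> Y) :
  homeo A B f -> f @` A = B.
Proof.
case=> g [fAB gBA [_ fg] _ _]; apply/seteqP; split => [_ [a Aa <-]|b Bb].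
  exact: fAB.
by exists (g b); [exact: gBA|exact: fg].
Qed.

Lemma homeo_eq {X Y : topologicalType} (A : set X) (B : set Y)
    (f h : X -> Y) :
  homeo A B f -> (forall a, A a -> f a = h a) -> homeo A B h.
Proof.
case=> g [fAB gBA [gf fg] cf cg] fh; exists g; split => //.
- by move=> a Aa; rewrite -fh //; exact: fAB.
- by split => [a Aa|b Bb]; rewrite -fh ?gf ?fg //; exact: gBA.
- by apply: subspace_eq_continuous cf => a /set_mem; exact: fh.
Qed.

Lemma homeo_comp {X Y Z : topologicalType} (A : set X) (B : set Y)
    (C : set Z) (f : X -> Y) (g : Y -> Z) :
  homeo A B f -> homeo B C g -> homeo A C (g \o f).
Proof.
case=> f' [fAB f'BA [f'f ff'] cf cf'] [g' [gBC g'CB [g'g gg'] cg cg']].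
exists (f' \o g'); split => /=.
- by move=> a Aa; exact/gBC/fAB.
- by move=> c Cc; exact/f'BA/g'CB.
- split => [a Aa|c Cc]; first by rewrite g'g ?f'f //; exact: fAB.
  by rewrite ff' ?gg' //; exact: g'CB.
- exact: (within_continuous_comp_within cf fAB cg).
- exact: (within_continuous_comp_within cg' g'CB cf').
Qed.

Lemma homeo_sub {X Y : topologicalType} (A A' : set X) (B : set Y)
    (f : X -> Y) :
  homeo A B f -> A' `<=` A -> homeo A' (f @` A') f.
Proof.
case=> g [fAB gBA [gf fg] cf cg] A'A; exists g; split.
- by move=> a A'a; exists a.
- by move=> _ [a A'a <-]; rewrite gf //; exact: A'A.
- by split => [a A'a|_ [a A'a <-]]; rewrite gf //; exact: A'A.
- exact: continuous_subspaceW cf.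
- by apply: continuous_subspaceW cg => _ [a A'a <-]; exact/fAB/A'A.
Qed.

Lemma homeo_can {X Y : topologicalType} (A : set X) (B : set Y)
    (f : X -> Y) (h : Y -> X) :
  homeo A B f -> (forall a, A a -> h (f a) = a) -> homeo B A h.
Proof.
case=> g [fAB gBA [gf fg] cf cg] hf.
apply: (homeo_eq (f := g)) => [|b Bb]; first by exists f; split.
by rewrite -{2}(fg b Bb) hf //; exact: gBA.
Qed.

Lemma homeo_open_in {X Y : topologicalType} (A D : set X) (B : set Y)
    (f : X -> Y) :
  homeo A B f -> open_in A D -> open_in B (f @` D).
Proof.
case=> g [fAB gBA [gf fg] _ cg] [O [oO ->]].
have -> : f @` (A `&` O) = B `&` g @^-1` O.
  apply/seteqP; split => [_ [a [Aa Oa] <-]|b [Bb Ogb]].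
    by split; [exact: fAB|rewrite /preimage /= gf].
  by exists (g b); [split => //; exact: gBA|exact: fg].
exact: open_in_preimage.
Qed.

Lemma homeo_pair {X Y : topologicalType} (A : set X) (c : Y) :
  homeo A ((fun x => (x, c)) @` A) (fun x => (x, c)).
Proof.
exists fst; split.
- by move=> a Aa; exists a.
- by move=> _ [a Aa <-].
- by split => // _ [a Aa <-].
- by apply: within_continuous_pair; apply: continuous_subspaceT => x;
    [exact: cvg_id|exact: cvg_cst].
- by apply: continuous_subspaceT => p; exact: cvg_fst.
Qed.

Section GroupoidUnits.
Context {X : topologicalType} (o : gops X).
Hypothesis gX : is_groupoid o.

Lemma units_gr (a : X) : units_of o (gr o a).
Proof. by case: gX => [[/(_ a) []]]. Qed.

Lemma units_gs (x : X) : units_of o x -> gs o x = x.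
Proof.
by move=> ux; case: gX => [[/(_ x) [+ _] _] _ _ _ _]; rewrite (ux : gr o x = x).
Qed.

Lemma bisection_units : bisection o (units_of o).
Proof.
split=> a b ua ub e; first by rewrite -(ua : gr o a = a) e.
by rewrite -(units_gs ua) e; exact: units_gs.
Qed.

Lemma units_open : continuous (gr o) -> etale o -> open (units_of o).
Proof.
move=> /continuousP cr [_ et]; rewrite openE => x ux.
have [U [oU Ux _ [g [_ _ [gr_K _] _ _]]]] := et x.
rewrite /interior nbhsE; exists (U `&` gr o @^-1` U).
  split; first exact/openI/cr.
  by split=> //; rewrite /preimage /= (ux : gr o x = x).
move=> y [Uy Ury]; rewrite /units_of /= -[RHS](gr_K _ Uy) -[LHS](gr_K _ Ury).
by rewrite (units_gr y : gr o (gr o y) = gr o y).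
Qed.

Lemma units_closed :
  continuous (gr o) -> hausdorff_space X -> closed (units_of o).
Proof.
move=> /continuousP cr; rewrite open_hausdorff -openC => hX.
rewrite openE => x nux.
have /hX [[A B] /= [xA yB] [oA oB /eqP AB0]] : x != gr o x.
  by apply/eqP => e; apply: nux; rewrite /units_of /= -e.
rewrite /interior nbhsE; exists (A `&` gr o @^-1` B).
  by split; [exact/openI/cr|split; rewrite -inE].
move=> y [Ay By] uy; have : (A `&` B) y by split => //; rewrite -uy.
by rewrite AB0.
Qed.

End GroupoidUnits.

Lemma bisection_sub {X : Type} (o : gops X) (B0 B : set X) :
  B `<=` B0 -> bisection o B0 -> bisection o B.
Proof. by move=> BB0 [r_inj s_inj]; split=> a b /BB0 Ba /BB0 Bb; auto. Qed.

Section DiscreteTwist.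
Variables (G S : topologicalType) (R : comUnitRingType).
Variables (oG : gops G) (T : set R) (oS : gops S).
Variables (i : G * discrete_topology R -> S) (q : S -> G).
Hypothesis gG : is_groupoid oG.
Hypothesis sgT : unit_subgroup T.
Hypothesis tw : discrete_twist oG T oS i q.

Lemma twist_topological_groupoid : topological_groupoid oS.
Proof. by have [[]] := tw. Qed.

Lemma continuous_q : continuous q.
Proof. by have [_ []] := tw. Qed.

Lemma q_i (x : G) (z : R) : units_of oG x -> T z -> q (i (x, z)) = x.
Proof.
move=> ux Tz; have [_ _ [_ [fibre _ _]] _ _] := tw.
have : (i @` prod_T [set x] T) (i (x, z)) by exists (x, z).
by rewrite fibre.
Qed.

Lemma fibre_units (e : S) :
  units_of oG (q e) -> exists2 z, T z & i (q e, z) = e.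
Proof.
move=> ue; have [_ _ [_ [fibre _ _]] _ _] := tw.
have : (q @^-1` [set q e]) e by [].
by rewrite -fibre // => -[[x z] [/= <- Tz] ie]; exists z.
Qed.

Lemma image_i_bundle : i @` bundle_dom oG T = q @^-1` units_of oG.
Proof.
apply/seteqP; split => [_ [[x z] [ux Tz] <-]|e ue].
  by rewrite /preimage /= q_i.
by have [z Tz ie] := fibre_units ue; exists (q e, z).
Qed.

Lemma open_i_bundle :
  continuous (gr oG) -> etale oG -> open (i @` bundle_dom oG T).
Proof.
move=> crG etG; rewrite image_i_bundle.
exact: (proj1 (continuousP _) continuous_q) (units_open gG crG etG).
Qed.

Lemma gr_gs_i (x : G) (z : R) : units_of oG x -> T z ->
  gr oS (i (x, z)) = i (x, 1) /\ gs oS (i (x, z)) = i (x, 1).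
Proof.
move=> ux Tz; have [_ [_ [ihom _] _ _] _ _ _] := tw.
by have [<- <-] := ihom (x, z) (conj ux Tz).
Qed.

Lemma gmul_i (x : G) (z w : R) : units_of oG x -> T z -> T w ->
  gmul oS (i (x, z)) (i (x, w)) = i (x, z * w).
Proof.
move=> ux Tz Tw; have [_ [_ [_ imul] _ _] _ _ _] := tw.
by rewrite -(imul (x, z) (x, w)).
Qed.

Lemma q_gr (e : S) : q (gr oS e) = gr oG (q e).
Proof. by have [_ [_ _ _ [/(_ e I) [-> _] _]] _ _ _] := tw. Qed.

Lemma q_gmul (a b : S) :
  gs oS a = gr oS b -> q (gmul oS a b) = gmul oG (q a) (q b).
Proof. by have [_ [_ _ _ [_ qmul]] _ _ _] := tw; exact: qmul. Qed.

Lemma units_i (x : G) : units_of oG x -> units_of oS (i (x, 1)).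
Proof. by move=> ux; have [[_ [_ ->]] _ _ _ _] := tw; exists (x, 1). Qed.

Lemma i_q_units (e : S) : units_of oS e -> i (q e, 1) = e.
Proof.
have [[_ [_ ->]] _ _ _ _] := tw; have [_ T1 _ _] := sgT.
by move=> -[[x z] [ux /= ->] <-]; rewrite q_i.
Qed.

Lemma homeo_units_i : homeo (units_of oG) (units_of oS) (fun x => i (x, 1)).
Proof.
by have [_ _ [[_ qhomeo] _] _ _] := tw; exact: homeo_can qhomeo i_q_units.
Qed.

Lemma gr_twist (e : S) : gr oS e = i (gr oG (q e), 1).
Proof.
have [gS _ _ _ _] := twist_topological_groupoid.
by rewrite -q_gr i_q_units //; exact: units_gr.
Qed.

Lemma q_triv_map (P : G -> S) (b : G) (z : R) : q (P b) = b -> T z ->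
  q (triv_map oG oS i P (b, z)) = b.
Proof.
move=> qP Tz; rewrite /triv_map /= q_gmul; last first.
  by rewrite (gr_gs_i (units_gr gG b) Tz).2 gr_twist qP.
rewrite q_i ?qP //; last exact: units_gr.
by case: gG => _ _ _ /(_ b) [].
Qed.

Definition local_trivialisation (B : set G) (P : G -> S) : Prop :=
  [/\ {within B, continuous P}, (forall b, B b -> q (P b) = b) &
      homeo (prod_T B T) (q @^-1` B) (triv_map oG oS i P)].

Lemma twist_local_trivialisation (alpha : G) :
  exists B P, [/\ open_bisection oG B, B alpha & local_trivialisation B P].
Proof.
have [_ _ _ triv _] := tw.
by have [B [P [? ? ? ? ?]]] := triv alpha; exists B, P.
Qed.

Lemma local_trivialisation_sub (B0 B : set G) (P : G -> S) :
  B `<=` B0 -> local_trivialisation B0 P -> local_trivialisation B P.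
Proof.
move=> BB0 [cP qP hP]; split.
- exact: continuous_subspaceW cP.
- by move=> b /BB0; exact: qP.
have BT : prod_T B T `<=` prod_T B0 T by move=> p [/BB0].
suff <- : triv_map oG oS i P @` prod_T B T = q @^-1` B.
  exact: homeo_sub hP BT.
apply/seteqP; split => [_ [[b z] [Bb Tz] <-]|e Be].
  by rewrite /preimage /= q_triv_map //; exact/qP/BB0.
have : (q @^-1` B0) e by exact: BB0.
rewrite -(homeo_image hP) => -[[b z] [B0b Tz] ebz].
exists (b, z) => //; split => //=.
suff <- : q e = b by [].
by rewrite -ebz q_triv_map //; exact: qP.
Qed.

Definition triv_sheet (P : G -> S) (z : R) (B : set G) : set S :=
  (fun b => triv_map oG oS i P (b, z)) @` B.

Lemma homeo_q_sheet (B0 B : set G) (P : G -> S) (z : R) :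
  local_trivialisation B0 P -> B `<=` B0 -> T z ->
  homeo (triv_sheet P z B) B q.
Proof.
move=> [_ qP hP] BB0 Tz.
have hsheet :
    homeo B (triv_sheet P z B) (triv_map oG oS i P \o (fun b => (b, z))).
  apply: homeo_comp (homeo_pair B (z : discrete_topology R)) _.
  rewrite /triv_sheet -image_comp.
  by apply: homeo_sub hP _ => _ [b Bb <-]; split => //; exact: BB0.
by apply: homeo_can hsheet _ => b Bb /=; rewrite q_triv_map //; exact/qP/BB0.
Qed.

Lemma open_sheet (B0 B : set G) (P : G -> S) (z : R) :
  local_trivialisation B0 P -> open B0 -> B `<=` B0 -> open B -> T z ->
  open (triv_sheet P z B).
Proof.
move=> [_ _ hP] oB0 BB0 oB Tz.
apply: (@open_in_open _ (q @^-1` B0)).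
  exact: (proj1 (continuousP _) continuous_q).
rewrite /triv_sheet -image_comp; apply: homeo_open_in hP _.
exists (B `*` [set z]); split.
  by apply: open_setX => //; exact: discrete_open.
apply/seteqP; split => [_ [b Bb <-]|[b w] [[_ Tw] [Bb /= ->]]].
  by split; [split => //; exact: BB0|].
by exists b.
Qed.

Lemma twist_etale : continuous (gr oG) -> etale oG -> etale oS.
Proof.
move=> crG [_ etG]; have [gS _ _ _ _] := twist_topological_groupoid.
split=> [e|e]; first exact: units_gr.
have [B [P [[oB _] Bqe trivP]]] := twist_local_trivialisation (q e).
have [U [oU Uqe rU_open hU]] := etG (q e).
have [[b z] [Bb Tz] ebz] : (triv_map oG oS i P @` prod_T B T) e.
  by case: trivP => _ _ /homeo_image ->.
have sheet_e : triv_sheet P z (B `&` U) e.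
  have qeb : q e = b.
    by rewrite -ebz q_triv_map //; case: trivP => _ qP _; exact: qP.
  by exists b => //; split => //; rewrite -qeb.
have hq := homeo_q_sheet trivP (@subIsetl _ B U) Tz.
have hr : homeo (B `&` U) (gr oG @` (B `&` U)) (gr oG).
  exact: homeo_sub hU (@subIsetr _ B U).
have hi : homeo (gr oG @` (B `&` U))
    ((fun x => i (x, 1)) @` (gr oG @` (B `&` U))) (fun x => i (x, 1)).
  by apply: homeo_sub homeo_units_i _ => _ [x _ <-]; exact: units_gr.
have hrS : homeo (triv_sheet P z (B `&` U))
    ((fun x => i (x, 1)) @` (gr oG @` (B `&` U))) (gr oS).
  apply: homeo_eq (homeo_comp hq (homeo_comp hr hi)) _ => e' _.
  by rewrite gr_twist.
exists (triv_sheet P z (B `&` U)); rewrite (homeo_image hrS); split => //.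
- exact: open_sheet trivP oB (@subIsetl _ B U) (openI oB oU) Tz.
- apply: homeo_open_in homeo_units_i _.
  apply: open_in_trans rU_open (homeo_open_in hU _).
  by exists B; split => //; rewrite setIC.
Qed.

(* The junk value 1 is taken off q^-1(G^(0)). *)
Definition twist_coord (e : S) : R :=
  xget 1 [set z | T z /\ i (q e, z) = e].

Lemma twist_coordP (e : S) :
  units_of oG (q e) -> T (twist_coord e) /\ i (q e, twist_coord e) = e.
Proof.
move=> ue; have [z Tz ie] := fibre_units ue.
by apply: (@xgetPex _ 1 [set z | T z /\ i (q e, z) = e]); exists z.
Qed.

Lemma twist_coord_i (x : G) (z : R) :
  units_of oG x -> T z -> twist_coord (i (x, z)) = z.
Proof.
move=> ux Tz; have [_ _ [_ [_ iinj _]] _ _] := tw.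
have [] := @twist_coordP (i (x, z)); first by rewrite q_i.
rewrite q_i // => Tc ic.
by have [] := iinj (x, twist_coord _) (x, z) (conj ux Tc) (conj ux Tz) ic.
Qed.

Lemma within_continuous_translate (z : R) : T z ->
  {within q @^-1` units_of oG, continuous (fun e => gmul oS (i (q e, z)) e)}.
Proof.
move=> Tz; have [_ [ci _ _ _] _ _ _] := tw.
have [_ _ _ _ cmS] := twist_topological_groupoid.
have ci_q : {within q @^-1` units_of oG, continuous (fun e => i (q e, z))}.
  apply: (within_continuous_comp_within (B := bundle_dom oG T)) ci => //.
  by apply: within_continuous_pair; apply: continuous_subspaceT => e;
    [exact: continuous_q|exact: cvg_cst].
apply: (within_continuous_comp_within (f := fun e => (i (q e, z), e))) cmS.
  apply: within_continuous_pair ci_q _.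
  by apply: continuous_subspaceT => e; exact: cvg_id.
move=> e ue; rewrite /composable /= (gr_gs_i ue Tz).2 gr_twist.
by rewrite (ue : gr oG (q e) = q e).
Qed.

Lemma twist_coord_locally_constant (e0 : S) :
  open (units_of oS) -> units_of oG (q e0) ->
  exists W, [/\ open W, W e0 & forall e, units_of oG (q e) -> W e ->
                                   twist_coord e = twist_coord e0].
Proof.
move=> oS0 ue0; have [Tunit T1 TM TV] := sgT.
have [Tz0 _] := twist_coordP ue0; set z0 := twist_coord e0 in Tz0 *.
pose D := q @^-1` units_of oG; pose k e := gmul oS (i (q e, z0^-1)) e.
have k_i e : D e -> k e = i (q e, z0^-1 * twist_coord e).
  move=> ue; have [Tz ie] := twist_coordP ue.
  by rewrite /k -[X in gmul _ _ X]ie gmul_i //; exact: TV.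
have [O [oO DkO]] :=
  open_in_preimage (within_continuous_translate (TV _ Tz0)) oS0.
have units_k e : D e -> O e -> units_of oS (k e).
  by move=> De Oe; have [] : (D `&` k @^-1` units_of oS) e by rewrite DkO.
exists O; split => //.
  have : (D `&` k @^-1` units_of oS) e0; last by rewrite DkO => -[].
  by split => //; rewrite /preimage /= k_i // mulVr ?Tunit //; exact: units_i.
move=> e De Oe; have [Tc _] := twist_coordP De.
have Tk : T (z0^-1 * twist_coord e) by exact/TM/Tc/TV.
have : twist_coord (k e) = 1.
  rewrite -(i_q_units (units_k e De Oe)) twist_coord_i //.
  by rewrite k_i // q_i.
rewrite k_i // twist_coord_i // => z0c.
by rewrite -(mulVKr (Tunit _ Tz0) (twist_coord e)) z0c mulr1.
Qed.

Lemma homeo_i_bundle :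
  open (units_of oS) -> homeo (bundle_dom oG T) (q @^-1` units_of oG) i.
Proof.
move=> oS0; have [_ [ci _ _ _] _ _ _] := tw.
exists (fun e => ((q e, twist_coord e) : G * discrete_topology R)); split.
- by move=> [x z] [ux Tz]; rewrite /preimage /= q_i.
- by move=> e ue; split => //; have [] := twist_coordP ue.
- split => [[x z] [ux Tz]|e ue]; first by rewrite /= q_i // twist_coord_i.
  by have [] := twist_coordP ue.
- exact: ci.
- apply: within_continuous_pair; first exact/continuous_subspaceT/continuous_q.
  apply: within_continuous_locally_constant => e0 ue0.
  exact: twist_coord_locally_constant.
Qed.

Lemma local_trivialisation_units :
  open (units_of oS) -> local_trivialisation (units_of oG) (fun x => i (x, 1)).
Proof.
move=> oS0; have [_ [ci _ _ _] _ _ _] := tw; have [_ T1 _ _] := sgT.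
split.
- apply: (within_continuous_comp_within (B := bundle_dom oG T)) ci => //.
  by apply: within_continuous_pair; apply: continuous_subspaceT => x;
    [exact: cvg_id|exact: cvg_cst].
- by move=> x ux; rewrite q_i.
- apply: homeo_eq (homeo_i_bundle oS0) _ => -[x z] [ux Tz].
  by rewrite /triv_map /= (ux : gr oG x = x) gmul_i // mulr1.
Qed.

Lemma local_trivialisation_units_compatible (alpha : G) :
  continuous (gr oG) -> hausdorff_space G -> etale oG ->
  exists B P, [/\ open_bisection oG B, B alpha, local_trivialisation B P &
    forall beta, B beta -> units_of oG beta -> units_of oS (P beta)].
Proof.
move=> crG hG etG; have [gS crS _ _ _] := twist_topological_groupoid.
have oS0 := units_open gS crS (twist_etale crG etG).
have [ua|nua] := pselect (units_of oG alpha).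
  exists (units_of oG), (fun x => i (x, 1)); split => //.
  - by split; [exact: units_open|exact: bisection_units].
  - exact: local_trivialisation_units.
  - by move=> x ux _; exact: units_i.
have [B0 [P [[oB0 bisB0] B0a trivP]]] := twist_local_trivialisation alpha.
exists (B0 `&` ~` units_of oG), P; split => //.
- split; first exact/openI/closed_openC/units_closed.
  exact: bisection_sub (@subIsetl _ _ _) bisB0.
- exact: local_trivialisation_sub (@subIsetl _ _ _) trivP.
- by move=> beta [].
Qed.

Lemma compact_local_trivialisation (alpha : G) : ample oG ->
  exists B P, [/\ open_bisection oG B, compact B, B alpha &
                  local_trivialisation B P].
Proof.
move=> amp.
have [B0 [P [[oB0 _] B0a trivP]]] := twist_local_trivialisation alpha.
have [B [obB cB Ba BB0]] := amp B0 alpha oB0 B0a.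
by exists B, P; split => //; exact: local_trivialisation_sub BB0 trivP.
Qed.

End DiscreteTwist.

Theorem lemma4p3 (G S : topologicalType) (R : comUnitRingType)
  (oG : gops G) (T : set R) (oS : gops S)
  (i : G * discrete_topology R -> S) (q : S -> G) :
  topological_groupoid oG -> hausdorff_space G -> locally_compact [set: G] ->
  etale oG ->
  unit_subgroup T ->
  discrete_twist oG T oS i q ->
  [/\ (* (a) *) etale oS,
      (* (b) *) homeo (bundle_dom oG T) (i @` bundle_dom oG T) i /\
                open (i @` bundle_dom oG T),
      (* (c) *)
      (forall alpha, exists B, exists P : G -> S,
         [/\ open_bisection oG B, B alpha, {within B, continuous P},
             (forall beta, B beta -> q (P beta) = beta) /\
             homeo (prod_T B T) (q @^-1` B) (triv_map oG oS i P) &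
             (forall beta, B beta -> units_of oG beta -> units_of oS (P beta))]) &
      (* (d) *)
      (ample oG ->
       forall alpha, exists B, exists P : G -> S,
         [/\ open_bisection oG B /\ compact B, B alpha, {within B, continuous P},
             (forall beta, B beta -> q (P beta) = beta) &
             homeo (prod_T B T) (q @^-1` B) (triv_map oG oS i P)])].
Proof.
move=> [gG crG _ _ _] hG _ etG sgT tw.
have etS := twist_etale gG sgT tw crG etG.
have [gS crS _ _ _] := twist_topological_groupoid tw.
have oS0 := units_open gS crS etS.
split => //.
- split; last exact: open_i_bundle gG tw crG etG.
  by rewrite (image_i_bundle tw); exact: homeo_i_bundle sgT tw oS0.
- move=> alpha.
  have [B [P [obB Ba [cP qP hP] PS0]]] :=
    local_trivialisation_units_compatible gG sgT tw alpha crG hG etG.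
  by exists B, P.
- move=> amp alpha.
  have [B [P [obB cB Ba [cP qP hP]]]] :=
    compact_local_trivialisation gG sgT tw alpha amp.
  by exists B, P.
Qed.
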